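(* The polynomials $P_n$ satisfy $P_0(y)=y-1$ and, for $n\ge1$, \[ P_n=nP_{n-1}-P'_{n-1}+\frac{1}{n}\sum_{k=1}^{n-1}k\bigl\{(k-1)P_{k-1}-P_k-P'_{k-1}\bigr\}P_{n-k-1}. \]
   Context: Let $A$ be the ring of formal series $a=\sum_{n=0}^\infty \frac{q_n(y)}{x^n}$, each $q_n$ a complex polynomial of degree at most $n$, with the obvious ring operations and the $x^{-1}$-adic topology. Formal derivatives: $a_x=-\sum_{n\ge1}\frac{n q_n(y)}{x^{n+1}}$, $a_y=\sum_{n\ge1}\frac{q_n'(y)}{x^n}$. For $1+u\in A$ with $u$ having zero constant term, $\log(1+u)=\sum_{k\ge1}(-1)^{k+1}u^k/k$. Let $V$ be the unique solution in $A$ of $V=1+\frac{y}{x}-\frac{1}{x}V-V_x-\frac{1}{x}V_y+\frac{1}{x}\log V$, and define polynomials $P_{n-1}$ ($n\ge1$) by $V=1+\sum_{n=1}^\infty\frac{P_{n-1}(y)}{x^n}$. Primes denote derivatives in $y$. *)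

From HB Require Import structures.
From mathcomp Require Import all_boot all_order all_algebra.
From mathcomp Require Import reals.
From mathcomp.real_closed Require Import complex.

Set Implicit Arguments.
Unset Strict Implicit.
Unset Printing Implicit Defensive.
Import Order.TTheory GRing.Theory Num.Theory.
Local Open Scope ring_scope.

(* A formal series  a = \sum_n q_n(y) / x^n  is represented by its sequence
   of coefficients  n |-> q_n : {poly F}. *)
Section FormalSeries.
Variable F : fieldType.

Definition series := nat -> {poly F}.

Definition inA (a : series) : Prop := forall n, (size (a n) <= n.+1)%N.

Definition sone : series := fun n => if n == 0%N then 1 else 0.
Definition syx : series := fun n => if n == 1%N then 'X else 0.

Definition sadd (a b : series) : series := fun n => a n + b n.
Definition sopp (a : series) : series := fun n => - a n.

Definition smul (a b : series) : series :=
  fun n => \sum_(i < n.+1) a i * b (n - i)%N.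

Fixpoint spow (a : series) (k : nat) : series :=
  if k is k'.+1 then smul a (spow a k') else sone.

Definition sdivx (a : series) : series :=
  fun n => if n is n'.+1 then a n' else 0.

(* a_x = - \sum_{n>=1} n q_n / x^{n+1} *)
Definition sdx (a : series) : series :=
  fun n => if n is n'.+1 then - (n'%:R *: a n') else 0.

Definition sdy (a : series) : series := fun n => (a n)^`().

(* For V = 1 + u with u having zero constant term,
   log V = \sum_{k>=1} (-1)^{k+1} u^k / k ; since u^k only has terms of
   order >= k in 1/x, the coefficient of x^{-n} is the finite sum over k <= n. *)
Definition slog (V : series) : series :=
  let u : series := fun n => if n == 0%N then 0 else V n in
  fun n => \sum_(1 <= k < n.+1) (((-1) ^+ k.+1) / k%:R) *: spow u k n.

Definition solves_eq (V : series) : Prop :=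
  forall n, V n = sone n + syx n - sdivx V n - sdx V n
                  - sdivx (sdy V) n + sdivx (slog V) n.

End FormalSeries.

(* Write t = 1/x.  Coefficientwise, the equation for V is the recurrence
   P_n = (n-1) P_{n-1} - P'_{n-1} + (log V)_n, so the theorem amounts to
   eliminating (log V)_n.  This is done with the logarithmic derivative:
   applying the Euler operator t d/dt to log V and multiplying by V gives
   t dV/dt, i.e. sum_{k<=n} V_{n-k} k (log V)_k = n V_n.  To use ordinary
   polynomial calculus, every identity is checked on the truncations of the
   series below a fixed order N, in {poly {poly F}} (outer variable t). *)
From HB Require Import structures.
From mathcomp Require Import all_boot all_order all_algebra.
From mathcomp Require Import reals.
From mathcomp.real_closed Require Import complex.
From mathcomp Require Import ring zify.
Set Implicit Arguments.
Unset Strict Implicit.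
Unset Printing Implicit Defensive.
Import Order.TTheory GRing.Theory Num.Theory.
Local Open Scope ring_scope.

Section Truncation.
Variable F : fieldType.
Implicit Types (a b : series F) (p q : {poly {poly F}}).

Definition agree (N : nat) p a := forall i, (i <= N)%N -> p`_i = a i.

Definition trunc (N : nat) a : {poly {poly F}} := \poly_(i < N.+1) a i.

Lemma agree_trunc N a : agree N (trunc N a) a.
Proof. by move=> i iN; rewrite coef_poly ltnS iN. Qed.

Lemma agree_mul N p q a b :
  agree N p a -> agree N q b -> agree N (p * q) (smul a b).
Proof.
move=> pa qb n nN; rewrite coefM; apply: eq_bigr => -[i /= ni] _.
by rewrite pa ?qb //; lia.
Qed.

Lemma agree_exp N p a k : agree N p a -> agree N (p ^+ k) (spow a k).
Proof.
move=> pa; elim: k => [|k IHk] /=; last by rewrite exprS; apply: agree_mul.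
by move=> i _; rewrite coef1 /sone; case: (i == 0%N).
Qed.

Lemma spow_eq0_ltn a k n : a 0%N = 0 -> (n < k)%N -> spow a k n = 0.
Proof.
move=> a0; elim: k n => [|k IHk] n //= nk.
rewrite /smul big1 // => -[[|i] /= ni] _; first by rewrite a0 mul0r.
by rewrite IHk ?mulr0 //; lia.
Qed.

Lemma coef_XM_deriv p m : ('X * p^`())`_m = p`_m *+ m.
Proof. by rewrite coefXM; case: m => [|m] //=; rewrite coef_deriv. Qed.

End Truncation.

Section LogarithmicDerivative.
Variable F : numFieldType.
Implicit Types (V : series F) (U : {poly {poly F}}).

Definition logp (N : nat) U : {poly {poly F}} :=
  \sum_(1 <= k < N.+1) (((-1) ^+ k.+1 / k%:R)%:P)%:P * U ^+ k.

Lemma deriv_logp N U : (logp N U)^`() = (\sum_(j < N) (- U) ^+ j) * U^`().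
Proof.
rewrite /logp raddf_sum big_add1 /= big_mkord mulr_suml; apply: eq_bigr => j _.
rewrite derivM derivC mul0r add0r deriv_exp /= mulrnAr -mulrnAl -!rmorphMn /=.
rewrite -mulr_natr divfK ?pnatr_eq0 //.
have -> : ((((-1) ^+ j.+2)%:P)%:P : {poly {poly F}}) = (-1) ^+ j.
  by rewrite !exprS !mulN1r opprK !rmorphXn !rmorphN1.
by rewrite (exprNn U) -mulrA [U^`() * _]mulrC.
Qed.

Lemma mulr_geometric_sum U N :
  (1 + U) * \sum_(j < N) (- U) ^+ j = 1 - (- U) ^+ N.
Proof.
rewrite mulr_sumr.
transitivity (- \sum_(0 <= j < N) ((- U) ^+ j.+1 - (- U) ^+ j)).
  rewrite -sumrN big_mkord; apply: eq_bigr => j _; rewrite exprS.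
  by move: ((- U) ^+ j) => x; ring.
by rewrite telescope_sumr // expr0 opprB.
Qed.

Lemma coef_logp_Euler N U n : U`_0 = 0 -> (n <= N)%N ->
  ((1 + U) * ('X * (logp N U)^`()))`_n = U`_n *+ n.
Proof.
move=> U0 nN.
have UE : U = drop_poly 1 U * 'X.
  rewrite -{1}(poly_take_drop 1 U) expr1 [take_poly 1 U](_ : _ = 0) ?add0r //.
  by apply/polyP => -[|i]; rewrite coef_take_poly coef0.
rewrite deriv_logp.
have -> : (1 + U) * ('X * ((\sum_(j < N) (- U) ^+ j) * U^`())) =
          'X * ((1 + U) * \sum_(j < N) (- U) ^+ j) * U^`().
  by move: (\sum_(j < N) _) => s; ring.
rewrite mulr_geometric_sum mulrBr mulr1 mulrBl coefB -mulrA coef_XM_deriv.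
have -> : 'X * ((- U) ^+ N * U^`()) =
          (- drop_poly 1 U) ^+ N * U^`() * 'X^(N.+1).
  rewrite {1}UE -mulNr exprMn exprS.
  by move: ((- _) ^+ N) ('X ^+ N) => a b; ring.
by rewrite coefMXn ltnS nN subr0.
Qed.

Lemma agree_logp N U V :
  agree N U (fun i => if i == 0%N then 0 else V i) -> agree N (logp N U) (slog V).
Proof.
move=> UV j jN; rewrite /logp coef_sum /slog /=.
rewrite (big_cat_nat (n := j.+1)) //= [X in _ + X]big_nat_cond.
rewrite [X in _ + X]big1 ?addr0 => [|k /andP[/andP[jk _] _]].
  by apply: eq_big_nat => k _; rewrite coefCM (agree_exp _ UV) // mul_polyC.
by rewrite coefCM (agree_exp _ UV) // spow_eq0_ltn ?mulr0.
Qed.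

Lemma slog_Euler V n : V 0%N = 1 ->
  \sum_(k < n.+1) V (n - k)%N * (slog V k *+ k) = V n *+ n.
Proof.
move=> V0.
pose U := trunc n (fun i => if i == 0%N then 0 else V i).
have UV : agree n U (fun i => if i == 0%N then 0 else V i) by exact: agree_trunc.
have := coef_logp_Euler (UV 0%N (leq0n n)) (leqnn n).
rewrite coefMr (UV n) // => /esym; case: ifPn => [/eqP -> _|_ ->].
  by rewrite big_ord1 !mulr0n mulr0.
apply: eq_bigr => -[k /= kn] _.
rewrite coef_XM_deriv (agree_logp UV) // coefD coef1 UV ?leq_subr //.
by case: eqP => [->|_]; rewrite ?V0 ?addr0 ?add0r.
Qed.

Lemma slog_Euler_inner V n : V 0%N = 1 -> (0 < n)%N ->
  \sum_(1 <= k < n) V (n - k)%N * (slog V k *+ k) = (V n - slog V n) *+ n.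
Proof.
move=> V0 n_gt0; have := slog_Euler n V0.
rewrite -(big_mkord xpredT (fun k => V (n - k)%N * (slog V k *+ k))).
rewrite big_nat_recr //= big_ltn // subnn V0 mul1r mulr0n mulr0 add0r => E.
by rewrite mulrnBl -E addrK.
Qed.

End LogarithmicDerivative.

Section Equation.
Variable F : fieldType.
Variable V : series F.
Hypothesis V_eq : solves_eq V.

Lemma solves_eq_coef1 : V 0%N = 1 -> V 1%N = 'X - 1.
Proof.
move=> V0; rewrite V_eq /sone /syx /sdivx /sdx /sdy /slog /= V0 big_geq //.
by rewrite -polyC1 derivC scale0r polyC1; ring.
Qed.

Lemma solves_eq_coefS k : (0 < k)%N ->
  V k.+1 = (k%:R - 1) *: V k - (V k)^`() + slog V k.
Proof.
rewrite V_eq /sone /syx /sdivx /sdx /sdy /=; case: k => // k _.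
by rewrite scalerBl scale1r; ring.
Qed.

End Equation.

Lemma solves_eq_recurrence (F : numFieldType) (V : series F) n :
  V 0%N = 1 -> solves_eq V -> (0 < n)%N ->
  V n.+1 = n%:R *: V n - (V n)^`()
           + n%:R^-1 *: \sum_(1 <= k < n)
               (k%:R *: ((k.-1)%:R *: V k - V k.+1 - (V k)^`())) * V (n - k)%N.
Proof.
move=> V0 V_eq n_gt0.
(* By the equation at order k + 1, the bracket is - (log V)_k. *)
rewrite (eq_big_nat _ _ (F2 := fun k => - (V (n - k)%N * (slog V k *+ k))));
  last first.
  move=> [|k] _ //=.
  rewrite (solves_eq_coefS V_eq (k := k.+1)) // scalerBl scale1r !scaler_nat.
  by rewrite -addn1 mulrnDr; ring.
rewrite sumrN slog_Euler_inner // scalerN -(scaler_nat n) scalerA.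
rewrite mulVf ?pnatr_eq0 -?lt0n // scale1r (solves_eq_coefS V_eq) //.
by rewrite scalerBl scale1r; ring.
Qed.

Theorem theorem4p4 (R : realType) (V : series R[i]) :
  inA V -> V 0%N = 1 -> solves_eq V ->
  let P := fun n : nat => V n.+1 in
  P 0%N = 'X - 1 /\
  forall n : nat, (1 <= n)%N ->
    P n = n%:R *: P n.-1 - (P n.-1)^`()
          + n%:R^-1 *: \sum_(1 <= k < n)
              (k%:R *: ((k.-1)%:R *: P k.-1 - P k - (P k.-1)^`()))
                * P (n - k - 1)%N.
Proof.
move=> _ V0 V_eq P; split; first exact: solves_eq_coef1.
move=> n n_gt0; rewrite /P prednK // solves_eq_recurrence //.
congr (_ + _ *: _); apply: eq_big_nat => -[|k] /andP[_ kn] //=.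
by have -> : (n - k.+1 - 1).+1 = (n - k.+1)%N by lia.
Qed.
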